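(* Let $\lambda<0$, $a>0$, $c\in\mathbb{R}$, and let $\Omega=[\omega^-,\omega^+]$ with $\omega^-<0<\omega^+$. Consider the control system on $\mathbb{R}^2$ $$\dot s=\omega,\qquad \dot t=\lambda t+\omega(c+as),\qquad \omega\in\Omega .$$ For $\omega\in\Omega$ define $F_\omega:\mathbb{R}^2\to\mathbb{R}$, $F_\omega(s,t)=\lambda^2 t+\omega\big(\lambda(c+as)+a\omega\big)$. Let $\mathbf v_a=(-c/a,0)$; for constant control $\omega$ the solution from $\mathbf v_a$ is $\varphi(\tau,\mathbf v_a,\omega)=\big(-\tfrac ca+\tau\omega,\ \tfrac{a\omega^2}{\lambda^2}(e^{\lambda\tau}-\lambda\tau-1)\big)$. Define $$\mathcal C^-=\{\mathbf v\in\mathbb{R}^2: F_{\omega^-}(\mathbf v)<0\text{ and }F_{\omega^+}(\mathbf v)<0\},$$ $$\mathcal C^+=\{(s,t)\in\mathbb{R}^2:\ \exists\,\tau\ge 0,\ \exists\,\omega\in\{\omega^-,\omega^+\}\text{ with } s=\varphi_1(\tau,\mathbf v_a,\omega)\text{ and } t>\varphi_2(\tau,\mathbf v_a,\omega)\}.$$ Then: (1) $\mathcal C^-$ and $\mathcal C^+$ are invariant in negative time: for every constant control $\omega\in\Omega$, every $\mathbf v$ in the set and every $\tau\le 0$, $\varphi(\tau,\mathbf v,\omega)$ lies in the same set. (2) For any $\omega_1,\omega_2\in\Omega$ with $\omega_1<0<\omega_2$, the region $\mathcal C(\omega_1,\omega_2)=\{\mathbf v\in\mathbb{R}^2: F_{\omega_1}(\mathbf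 v)\,F_{\omega_2}(\mathbf v)<0\}$ is controllable, i.e. for any $\mathbf v,\mathbf w\in\mathcal C(\omega_1,\omega_2)$ there exist a piecewise constant control $\omega(\cdot)$ with values in $\Omega$ and $\tau\ge0$ with $\varphi(\tau,\mathbf v,\omega)=\mathbf w$.
   Context: $\varphi(\tau,\mathbf v,\omega)=(\varphi_1,\varphi_2)$ denotes the solution of the system at time $\tau$ starting at $\mathbf v$ with control $\omega$ (controls are piecewise constant functions with values in $\Omega$). *)

From Stdlib Require Import Reals Lra List.
Open Scope R_scope.

(* Flow of  s' = w,  t' = lam t + w (c + a s)  with constant control w,
   starting at v = (s0,t0) at time 0, evaluated at time tau (any real tau).
   This is the explicit solution of the linear ODE (valid for lam <> 0). *)
Definition phi (lam a c : R) (tau : R) (v : R * R) (w : R) : R * R :=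
  let s0 := fst v in
  let t0 := snd v in
  let k := a * w * w in
  let b := w * (c + a * s0) in
  let A := - k / (lam * lam) - b / lam in
  let B := - k / lam in
  (s0 + tau * w, A + B * tau + (t0 - A) * exp (lam * tau)).

Lemma phi_init lam a c v w : phi lam a c 0 v w = v.
Proof.
  destruct v as [s0 t0]; unfold phi; simpl.
  rewrite !Rmult_0_r, exp_0; f_equal; ring.
Qed.

Lemma phi_solves lam a c v w tau : lam <> 0 ->
  derivable_pt_lim (fun u => fst (phi lam a c u v w)) tau w /\
  derivable_pt_lim (fun u => snd (phi lam a c u v w)) tau
     (lam * snd (phi lam a c tau v w) + w * (c + a * fst (phi lam a c tau v w))).
Proof.
  intro Hl; destruct v as [s0 t0]; unfold phi; simpl; split.
  - assert (H : derivable_pt_lim (fun u => s0 + u * w) tau (0 + (1 * w + tau * 0))).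
    { apply (derivable_pt_lim_plus (fun _ => s0) (fun u => u * w)).
      + apply derivable_pt_lim_const.
      + apply (derivable_pt_lim_mult id (fun _ => w)).
        * apply derivable_pt_lim_id.
        * apply derivable_pt_lim_const. }
    replace (0 + (1 * w + tau * 0)) with w in H by ring. exact H.
  - set (A := - (a * w * w) / (lam * lam) - w * (c + a * s0) / lam).
    set (B := - (a * w * w) / lam).
    assert (H : derivable_pt_lim
      (fun u => A + B * u + (t0 - A) * exp (lam * u)) tau
      (0 + B * 1 + (t0 - A) * (exp (lam * tau) * (lam * 1)))).
    { apply derivable_pt_lim_plus.
      - apply derivable_pt_lim_plus; [apply derivable_pt_lim_const|].
        apply derivable_pt_lim_scal with (f := id). apply derivable_pt_lim_id.
      - apply derivable_pt_lim_scal with (f := fun u => exp (lam * u)).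
        apply (derivable_pt_lim_comp (fun u => lam * u) exp).
        + apply derivable_pt_lim_scal with (f := id). apply derivable_pt_lim_id.
        + apply derivable_pt_lim_exp. }
    match goal with |- derivable_pt_lim _ _ ?l => replace l with
      (0 + B * 1 + (t0 - A) * (exp (lam * tau) * (lam * 1))) end.
    + exact H.
    + unfold A, B; field; exact Hl.
Qed.

Definition F (lam a c w : R) (v : R * R) : R :=
  lam ^ 2 * snd v + w * (lam * (c + a * fst v) + a * w).

Definition va (a c : R) : R * R := (- c / a, 0).

Definition Cminus (lam a c wm wp : R) (v : R * R) : Prop :=
  F lam a c wm v < 0 /\ F lam a c wp v < 0.

Definition Cplus (lam a c wm wp : R) (v : R * R) : Prop :=
  exists tau w, 0 <= tau /\ (w = wm \/ w = wp) /\
    fst v = fst (phi lam a c tau (va a c) w) /\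
    snd v > snd (phi lam a c tau (va a c) w).

Definition Creg (lam a c w1 w2 : R) (v : R * R) : Prop :=
  F lam a c w1 v * F lam a c w2 v < 0.

(* A piecewise constant control with values in [wm,wp] on [0,tau], tau >= 0,
   is encoded as a finite list of pieces (duration d_i >= 0, value w_i);
   tau = sum of the d_i, and the trajectory is the concatenation of
   constant-control flows. *)
Definition admissible (wm wp : R) (ctrl : list (R * R)) : Prop :=
  Forall (fun p => 0 <= fst p /\ wm <= snd p <= wp) ctrl.

Definition run (lam a c : R) (ctrl : list (R * R)) (v : R * R) : R * R :=
  fold_left (fun x p => phi lam a c (fst p) x (snd p)) ctrl v.

Definition reachable (lam a c wm wp : R) (v w : R * R) : Prop :=
  exists ctrl, admissible wm wp ctrl /\ run lam a c ctrl v = w.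

(* Along the flow with constant control q,
     F_u (phi tau v q) = F_u v + F_q v (e^{lam tau} - 1) - lam a q (q - u) tau.

   For C^-: backwards in time e^{lam tau} - 1 >= lam tau >= 0, so when F_q v <= 0 this gives
   F_u (phi tau v q) <= F_u v + lam tau (F_q v - a q (q - u)); both q |-> F_q v (convex) and
   q |-> F_q v - a q (q - u) (affine) are negative on Omega as soon as they are at its ends.

   For C^+: with g_u the curve traced by v_a under the control u, C^+ is the region above
   the lower envelope of g_{w-} and g_{w+}, because on each side of s = -c/a the parabola
   t = a (s + c/a)^2 / 2 separates the two curves (Taylor bounds for exp).  Along any
   trajectory with u (u - q) >= 0, e^{-lam tau} (t - g_u(s)) is nonincreasing, so lying
   above g_u is preserved backwards in time.

   For controllability, use X = F_{w1} and Y = F_{w2} as coordinates.  Under w1, X decays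
   exponentially while Y grows at a constant rate, and symmetrically under w2.  Hence from
   any point, w1 then w2 leads into {X < 0 < Y}.  Within {X > 0 > Y} one goes from v to the
   axis {Y = 0} with X as small as wanted (make X large with w2, then under w1 the decay of
   X outruns the linear growth of Y), slides along the axis with w2, and joins the
   backward w1-trajectory of the target. *)

From Stdlib Require Import Reals Lra List.
From Coquelicot Require Import Rcomplements Hierarchy Derive AutoDerive.
Open Scope R_scope.

(** * Elementary real analysis *)

Lemma nonincreasing_of_deriv_nonpos (f f' : R -> R) x y :
  (forall z, derivable_pt_lim f z (f' z)) -> (forall z, f' z <= 0) -> x <= y -> f y <= f x.
Proof.
  intros Hf Hf' Hxy; destruct (Req_dec x y) as [<- | Hne]; [lra|].
  destruct (MVT_cor2 f f' x y) as [z [Hz _]]; [lra | intros; apply Hf |].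
  specialize (Hf' z); nra.
Qed.

Lemma exp_le_compat x y : x <= y -> exp x <= exp y.
Proof.
  intro Hxy; destruct (Req_dec x y) as [<- | Hne]; [lra|].
  left; apply exp_increasing; lra.
Qed.

Lemma taylor2_gap_nonincreasing x y : x <= y ->
  1 + y + y ^ 2 / 2 - exp y <= 1 + x + x ^ 2 / 2 - exp x.
Proof.
  apply (nonincreasing_of_deriv_nonpos (fun z => 1 + z + z ^ 2 / 2 - exp z)
    (fun z => 1 + z - exp z)).
  - intro z; apply is_derive_Reals; auto_derive; [exact I | field].
  - intro z; pose proof (exp_ineq1_le z); lra.
Qed.

Lemma exp_ge_taylor2 x : 0 <= x -> 1 + x + x ^ 2 / 2 <= exp x.
Proof.
  intro Hx; pose proof (taylor2_gap_nonincreasing 0 x Hx) as H; rewrite exp_0 in H; lra.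
Qed.

Lemma exp_le_taylor2 x : x <= 0 -> exp x <= 1 + x + x ^ 2 / 2.
Proof.
  intro Hx; pose proof (taylor2_gap_nonincreasing x 0 Hx) as H; rewrite exp_0 in H; lra.
Qed.

Lemma exp_dominates_linear alpha beta gamma : 0 < alpha ->
  exists x, 0 <= x /\ beta * x + gamma <= alpha * (exp x - 1).
Proof.
  intro Halpha.
  set (b := Rabs beta + Rabs gamma).
  assert (Hb : 0 <= b) by (unfold b; pose proof (Rabs_pos beta); pose proof (Rabs_pos gamma); lra).
  set (x := 1 + 2 * b / alpha).
  assert (Hax : alpha * x = alpha + 2 * b) by (unfold x; field; lra).
  assert (Hx : 1 <= x) by (unfold x; assert (0 <= b / alpha) by (apply Rdiv_le_0_compat; lra); lra).
  exists x; split; [lra|].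
  pose proof (exp_ge_taylor2 x ltac:(lra)).
  assert (alpha * (exp x - 1) >= b * x) by nra.
  pose proof (Rle_abs beta); pose proof (Rle_abs gamma); pose proof (Rabs_pos gamma).
  unfold b in *; nra.
Qed.

Lemma ramp_root_with_small_decay lam k eps X Y : lam < 0 -> 0 < k -> Y < 0 ->
  2 * k <= - lam * X -> 8 * k ^ 2 <= lam ^ 2 * eps * X ->
  exists t, 0 <= t /\ Y + X * (exp (lam * t) - 1) + k * t = 0 /\ X * exp (lam * t) <= eps.
Proof.
  intros Hlam Hk HY HX1 HX2.
  assert (HX : 0 < X) by nra.
  set (g t := Y + X * (exp (lam * t) - 1) + k * t).
  (* at ta, the ramp k t has only reached X / 2 while exp (lam t) <= min (1/2, eps / X) *)
  set (ta := X / (2 * k)).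
  set (x := - lam * ta).
  assert (Hkta : k * ta = X / 2) by (unfold ta; field; lra).
  assert (Hxk : 2 * k * x = - lam * X) by (unfold x, ta; field; lra).
  assert (Hx : 1 <= x) by nra.
  assert (Hexp : exp (lam * ta) * exp x = 1).
  { unfold x; rewrite <- exp_plus; replace (lam * ta + - lam * ta) with 0 by ring; apply exp_0. }
  pose proof (exp_ge_taylor2 x ltac:(lra)) as Htaylor.
  pose proof (exp_pos (lam * ta)) as Hpos.
  assert (Hhalf : exp (lam * ta) <= 1 / 2) by nra.
  assert (Hsmall : X * exp (lam * ta) <= eps).
  { assert (Hx2 : exp (lam * ta) * x ^ 2 <= 2).
    { assert (Hsq : x ^ 2 <= 2 * exp x) by nra.
      apply (Rmult_le_compat_l (exp (lam * ta))) in Hsq; lra. }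
    assert (H : X * exp (lam * ta) * (lam ^ 2 * X) <= eps * (lam ^ 2 * X)).
    { replace (X * exp (lam * ta) * (lam ^ 2 * X)) with (4 * k ^ 2 * (exp (lam * ta) * x ^ 2))
        by (unfold x, ta; field; lra).
      nra. }
    apply Rmult_le_reg_r in H; nra. }
  set (tb := ta + (X - Y) / k).
  assert (Htab : ta <= tb)
    by (unfold tb; pose proof (Rdiv_lt_0_compat (X - Y) k ltac:(lra) Hk); lra).
  assert (Hga : g ta < 0) by (unfold g; nra).
  assert (Hgb : 0 < g tb).
  { unfold g, tb; pose proof (exp_pos (lam * (ta + (X - Y) / k))).
    assert (k * ((X - Y) / k) = X - Y) by (field; lra). nra. }
  destruct (IVT_cor g ta tb) as [t [Ht Hgt]]; [unfold g; reg | lra | nra |].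
  exists t; split; [|split].
  - assert (0 < ta) by (unfold ta; apply Rdiv_lt_0_compat; lra); lra.
  - exact Hgt.
  - assert (exp (lam * t) <= exp (lam * ta)) by (apply exp_le_compat; nra). nra.
Qed.

(** * The flow and the functions F_u *)

Lemma phi_add lam a c t1 t2 v q : lam <> 0 ->
  phi lam a c (t1 + t2) v q = phi lam a c t2 (phi lam a c t1 v q) q.
Proof.
  intro Hlam; destruct v as [s t]; unfold phi; simpl.
  replace (lam * (t1 + t2)) with (lam * t1 + lam * t2) by ring.
  rewrite exp_plus; f_equal; [ring | field; exact Hlam].
Qed.

Lemma phi_opp lam a c tau v q : lam <> 0 ->
  phi lam a c tau (phi lam a c (- tau) v q) q = v.
Proof.
  intro Hlam; rewrite <- phi_add by exact Hlam.
  replace (- tau + tau) with 0 by ring; apply phi_init.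
Qed.

Lemma F_phi lam a c u q tau v : lam <> 0 ->
  F lam a c u (phi lam a c tau v q) =
  F lam a c u v + F lam a c q v * (exp (lam * tau) - 1) - lam * a * q * (q - u) * tau.
Proof. intro Hlam; destruct v as [s t]; unfold F, phi; simpl; field; exact Hlam. Qed.

Lemma F_phi_self lam a c q tau v : lam <> 0 ->
  F lam a c q (phi lam a c tau v q) = F lam a c q v * exp (lam * tau).
Proof. intro Hlam; rewrite F_phi by exact Hlam; ring. Qed.

Lemma F_inj lam a c u1 u2 z z' : lam <> 0 -> a <> 0 -> u1 <> u2 ->
  F lam a c u1 z = F lam a c u1 z' -> F lam a c u2 z = F lam a c u2 z' -> z = z'.
Proof.
  intros Hlam Ha Hu E1 E2; destruct z as [s t], z' as [s' t']; unfold F in *; simpl in *.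
  assert (Hs : s = s').
  { assert (E : (u2 - u1) * lam * a * (s - s') = 0) by nra.
    assert ((u2 - u1) * lam * a <> 0)
      by (repeat apply Rmult_integral_contrapositive_currified; lra).
    apply Rmult_integral in E; lra. }
  subst s'; f_equal.
  assert (E : lam ^ 2 * (t - t') = 0) by nra.
  apply Rmult_integral in E; destruct E as [E | E]; [|lra].
  exfalso; exact (pow_nonzero _ 2 Hlam E).
Qed.

(** * Negative-time invariance of C^- and C^+ *)

Lemma F_neg_between lam a c wm wp q v : 0 < a -> wm <= q <= wp ->
  F lam a c wm v < 0 -> F lam a c wp v < 0 -> F lam a c q v < 0.
Proof.
  intros Ha Hq Hm Hp.
  destruct (Req_dec q wm) as [-> | Hne]; [exact Hm|].
  assert (E : (wp - wm) * F lam a c q v =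
    (wp - q) * F lam a c wm v + (q - wm) * F lam a c wp v - a * (q - wm) * (wp - q) * (wp - wm))
    by (unfold F; ring).
  assert (0 <= a * (q - wm) * (wp - q) * (wp - wm)) by (repeat apply Rmult_le_pos; lra).
  nra.
Qed.

Lemma F_neg_backward lam a c wm wp u q v tau : lam < 0 -> 0 < a -> wm < 0 < wp ->
  wm <= u <= wp -> wm <= q <= wp -> F lam a c wm v < 0 -> F lam a c wp v < 0 -> tau <= 0 ->
  F lam a c u (phi lam a c tau v q) < 0.
Proof.
  intros Hlam Ha Hw Hu Hq Hm Hp Htau.
  rewrite F_phi by lra.
  pose proof (F_neg_between lam a c wm wp q v Ha Hq Hm Hp) as Hfq.
  pose proof (F_neg_between lam a c wm wp u v Ha Hu Hm Hp) as Hfu.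
  assert (Hg : F lam a c q v - a * q * (q - u) <= 0).
  { assert (E : (wp - wm) * (F lam a c q v - a * q * (q - u)) =
      (wp - q) * (F lam a c wm v - a * wm * (wm - u)) +
      (q - wm) * (F lam a c wp v - a * wp * (wp - u))) by (unfold F; ring).
    assert (0 <= a * (wm * (wm - u))) by (apply Rmult_le_pos; nra).
    assert (0 <= a * (wp * (wp - u))) by (apply Rmult_le_pos; nra).
    nra. }
  set (x := lam * tau).
  assert (Hx : 0 <= x) by (unfold x; nra).
  pose proof (exp_ineq1_le x).
  replace (lam * a * q * (q - u) * tau) with (a * q * (q - u) * x) by (unfold x; ring).
  nra.
Qed.

Definition branch (lam a c u s : R) : R :=
  a * u ^ 2 / lam ^ 2 * (exp (lam * (s + c / a) / u) - lam * (s + c / a) / u - 1).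

Lemma phi_va lam a c tau u : lam <> 0 -> a <> 0 -> u <> 0 ->
  phi lam a c tau (va a c) u = (- c / a + tau * u, branch lam a c u (- c / a + tau * u)).
Proof.
  intros Hlam Ha Hu; unfold phi, va, branch; simpl.
  replace (lam * (- c / a + tau * u + c / a) / u) with (lam * tau) by (field; split; auto; lra).
  f_equal; field; auto.
Qed.

Lemma branch_ge_parabola lam a c u s : lam < 0 -> 0 < a -> u <> 0 ->
  (s + c / a) * u <= 0 -> a * (s + c / a) ^ 2 / 2 <= branch lam a c u s.
Proof.
  intros Hlam Ha Hu Hs; unfold branch.
  set (y := lam * (s + c / a) / u).
  assert (Hy : 0 <= y).
  { unfold y; replace (lam * (s + c / a) / u) with (- lam * (- ((s + c / a) * u)) / (u * u))
      by (field; split; auto; lra).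
    apply Rdiv_le_0_compat; nra. }
  assert (Hya : a * u ^ 2 / lam ^ 2 * (y ^ 2 / 2) = a * (s + c / a) ^ 2 / 2)
    by (unfold y; field; repeat split; auto; lra).
  pose proof (exp_ge_taylor2 y Hy).
  assert (0 <= a * u ^ 2 / lam ^ 2) by (apply Rdiv_le_0_compat; nra).
  nra.
Qed.

Lemma branch_le_parabola lam a c u s : lam < 0 -> 0 < a -> u <> 0 ->
  0 <= (s + c / a) * u -> branch lam a c u s <= a * (s + c / a) ^ 2 / 2.
Proof.
  intros Hlam Ha Hu Hs; unfold branch.
  set (y := lam * (s + c / a) / u).
  assert (Hy : y <= 0).
  { unfold y; replace (lam * (s + c / a) / u) with (- (- lam * ((s + c / a) * u) / (u * u)))
      by (field; split; auto; lra).
    assert (0 <= - lam * ((s + c / a) * u) / (u * u)) by (apply Rdiv_le_0_compat; nra).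
    lra. }
  assert (Hya : a * u ^ 2 / lam ^ 2 * (y ^ 2 / 2) = a * (s + c / a) ^ 2 / 2)
    by (unfold y; field; repeat split; auto; lra).
  pose proof (exp_le_taylor2 y Hy).
  assert (0 <= a * u ^ 2 / lam ^ 2) by (apply Rdiv_le_0_compat; nra).
  nra.
Qed.

Lemma Cplus_of_above_branch lam a c wm wp u v : lam < 0 -> 0 < a -> u <> 0 ->
  (u = wm \/ u = wp) -> 0 <= (fst v + c / a) * u -> branch lam a c u (fst v) < snd v ->
  Cplus lam a c wm wp v.
Proof.
  intros Hlam Ha Hu Hwu Hs Hv.
  exists ((fst v + c / a) / u), u.
  rewrite phi_va by lra.
  replace (- c / a + (fst v + c / a) / u * u) with (fst v) by (field; lra).
  repeat split; [|exact Hwu|exact Hv].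
  replace ((fst v + c / a) / u) with ((fst v + c / a) * u / (u * u)) by (field; lra).
  apply Rdiv_le_0_compat; nra.
Qed.

Lemma Cplus_iff_above_branch lam a c wm wp v : lam < 0 -> 0 < a -> wm < 0 < wp ->
  Cplus lam a c wm wp v <->
  branch lam a c wm (fst v) < snd v \/ branch lam a c wp (fst v) < snd v.
Proof.
  intros Hlam Ha Hw; split.
  - intros (tau & u & Htau & Hwu & Hs & Ht).
    assert (Hu : u <> 0) by (destruct Hwu; lra).
    rewrite phi_va in Hs, Ht by lra; simpl in Hs, Ht; rewrite <- Hs in Ht.
    destruct Hwu as [<- | <-]; [left | right]; lra.
  - set (sigma := fst v + c / a).
    assert (Hsplit : forall u u', u * u' < 0 -> (u = wm \/ u = wp) -> (u' = wm \/ u' = wp) ->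
      branch lam a c u (fst v) < snd v -> Cplus lam a c wm wp v).
    { intros u u' Huu' Hwu Hwu' Hv.
      assert (Hu : u <> 0) by nra. assert (Hu' : u' <> 0) by nra.
      destruct (Rle_or_lt 0 (sigma * u)) as [Hs | Hs].
      - exact (Cplus_of_above_branch lam a c wm wp u v Hlam Ha Hu Hwu Hs Hv).
      - assert (Hs' : 0 < sigma * u').
        { assert (0 < (sigma * u') * (u * u)) by nra.
          assert (0 < u * u) by nra. nra. }
        apply (Cplus_of_above_branch lam a c wm wp u' v Hlam Ha Hu' Hwu'); [fold sigma; lra|].
        pose proof (branch_le_parabola lam a c u' (fst v) Hlam Ha Hu' ltac:(fold sigma; lra)).
        pose proof (branch_ge_parabola lam a c u (fst v) Hlam Ha Hu ltac:(fold sigma; lra)).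
        lra. }
    intros [Hv | Hv]; [apply (Hsplit wm wp) | apply (Hsplit wp wm)]; auto; nra.
Qed.

Lemma branch_gap_deriv lam a c u q v r : lam <> 0 -> a <> 0 -> u <> 0 ->
  derivable_pt_lim
    (fun r => exp (- lam * r) *
      (snd (phi lam a c r v q) - branch lam a c u (fst (phi lam a c r v q))))
    r
    (let y := lam * (fst (phi lam a c r v q) + c / a) / u in
     exp (- lam * r) * (a * u * (u - q) / lam) * (exp y - y - 1)).
Proof.
  intros Hlam Ha Hu; destruct v as [s t]; unfold phi, branch; simpl.
  apply is_derive_Reals; auto_derive; [repeat split; auto|].
  change (lam * (s + r * q + c / a) * / u) with (lam * (s + r * q + c / a) / u).
  field; auto.
Qed.

Lemma above_branch_backward lam a c u q v tau : lam < 0 -> 0 < a -> u <> 0 ->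
  0 <= u * (u - q) -> tau <= 0 -> branch lam a c u (fst v) < snd v ->
  branch lam a c u (fst (phi lam a c tau v q)) < snd (phi lam a c tau v q).
Proof.
  intros Hlam Ha Hu Hq Htau Hv.
  set (m r := exp (- lam * r) *
    (snd (phi lam a c r v q) - branch lam a c u (fst (phi lam a c r v q)))).
  assert (Hm : m 0 <= m tau).
  { apply (nonincreasing_of_deriv_nonpos m _ tau 0
      (fun r => branch_gap_deriv lam a c u q v r ltac:(lra) ltac:(lra) Hu)); [|exact Htau].
    intro r; cbv zeta.
    set (y := lam * (fst (phi lam a c r v q) + c / a) / u).
    pose proof (exp_ineq1_le y); pose proof (exp_pos (- lam * r)).
    assert (a * u * (u - q) / lam <= 0).
    { replace (a * u * (u - q) / lam) with (- (a * (u * (u - q)) / - lam)) by (field; lra).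
      assert (0 <= a * (u * (u - q)) / - lam) by (apply Rdiv_le_0_compat; nra). lra. }
    assert (0 <= exp (- lam * r) * (exp y - y - 1)) by nra.
    nra. }
  unfold m in Hm; rewrite phi_init, Rmult_0_r, exp_0, Rmult_1_l in Hm.
  pose proof (exp_pos (- lam * tau)); nra.
Qed.

(** * Controllability *)

Lemma reachable_trans lam a c wm wp u v w :
  reachable lam a c wm wp u v -> reachable lam a c wm wp v w -> reachable lam a c wm wp u w.
Proof.
  intros [c1 [A1 R1]] [c2 [A2 R2]]; exists (c1 ++ c2); split.
  - apply Forall_app; auto.
  - unfold run in *; rewrite fold_left_app, R1; exact R2.
Qed.

Lemma reachable_phi lam a c wm wp tau v q : 0 <= tau -> wm <= q <= wp ->
  reachable lam a c wm wp v (phi lam a c tau v q).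
Proof.
  intros Htau Hq; exists ((tau, q) :: nil); split; [|reflexivity].
  constructor; [simpl; lra | constructor].
Qed.

Section Controllability.

Variables (lam a c wm wp u1 u2 : R).
Hypotheses (lam_neg : lam < 0) (a_pos : 0 < a)
  (u1_in : wm <= u1 <= wp) (u2_in : wm <= u2 <= wp) (u1u2_neg : u1 * u2 < 0).

Notation X := (F lam a c u1).
Notation Y := (F lam a c u2).
Notation reach := (reachable lam a c wm wp).

Let k1 := - lam * a * u1 * (u1 - u2).
Let k2 := - lam * a * u2 * (u2 - u1).

Let lam_neq0 : lam <> 0. Proof. lra. Qed.
Let a_neq0 : a <> 0. Proof. lra. Qed.

Let k1_pos : 0 < k1.
Proof.
  unfold k1; replace (- lam * a * u1 * (u1 - u2)) with (- lam * a * (u1 * (u1 - u2))) by ring.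
  assert (0 < u1 * (u1 - u2)) by nra; assert (0 < - lam * a) by nra; nra.
Qed.

Let k2_pos : 0 < k2.
Proof.
  unfold k2; replace (- lam * a * u2 * (u2 - u1)) with (- lam * a * (u2 * (u2 - u1))) by ring.
  assert (0 < u2 * (u2 - u1)) by nra; assert (0 < - lam * a) by nra; nra.
Qed.

Let Y_phi_u1 tau v : Y (phi lam a c tau v u1) = Y v + X v * (exp (lam * tau) - 1) + k1 * tau.
Proof. rewrite F_phi by exact lam_neq0; unfold k1; ring. Qed.

Let X_phi_u2 tau v : X (phi lam a c tau v u2) = X v + Y v * (exp (lam * tau) - 1) + k2 * tau.
Proof. rewrite F_phi by exact lam_neq0; unfold k2; ring. Qed.

Lemma reachable_axis_backward w : 0 < X w -> Y w < 0 ->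
  exists z, reach z w /\ Y z = 0 /\ X w <= X z.
Proof.
  intros HX HY.
  set (g T := Y w + X w * (exp (lam * - T) - 1) + k1 * - T).
  destruct (exp_dominates_linear (X w) (k1 / - lam) (- Y w) HX) as [x [Hx Hdom]].
  set (T0 := x / - lam).
  assert (HT0 : 0 <= T0) by (apply Rdiv_le_0_compat; lra).
  assert (HgT0 : 0 <= g T0).
  { unfold g; replace (lam * - T0) with x by (unfold T0; field; lra).
    replace (k1 * - T0) with (- (k1 / - lam * x)) by (unfold T0; field; lra).
    lra. }
  assert (Hg0 : g 0 = Y w) by (unfold g; rewrite Ropp_0, Rmult_0_r, exp_0; ring).
  destruct (IVT_cor g 0 T0) as [T [HT HgT]]; [unfold g; reg | exact HT0 | nra |].
  exists (phi lam a c (- T) w u1); split; [|split].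
  - rewrite <- (phi_opp lam a c T w u1) at 2 by exact lam_neq0.
    apply reachable_phi; lra.
  - rewrite Y_phi_u1; exact HgT.
  - rewrite F_phi_self by exact lam_neq0.
    assert (1 <= exp (lam * - T)) by (pose proof (exp_ineq1_le (lam * - T)); nra).
    nra.
Qed.

Lemma reachable_axis_forward v eps : 0 < X v -> Y v < 0 -> 0 < eps ->
  exists z, reach v z /\ Y z = 0 /\ X z <= eps.
Proof.
  intros HX HY Heps; pose proof k1_pos; pose proof k2_pos.
  set (A := 2 * k1 / - lam). set (B := 8 * k1 ^ 2 / (lam ^ 2 * eps)).
  assert (HA : - lam * A = 2 * k1) by (unfold A; field; lra).
  assert (HB : lam ^ 2 * eps * B = 8 * k1 ^ 2) by (unfold B; field; split; lra).
  assert (HA0 : 0 < A) by (apply Rdiv_lt_0_compat; lra).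
  assert (HB0 : 0 < B) by (apply Rdiv_lt_0_compat; [|apply Rmult_lt_0_compat]; nra).
  set (tau := (A + B) / k2).
  assert (Htau : k2 * tau = A + B) by (unfold tau; field; lra).
  assert (Htau0 : 0 <= tau) by (unfold tau; apply Rdiv_le_0_compat; lra).
  set (v1 := phi lam a c tau v u2).
  assert (HX1 : A + B <= X v1).
  { unfold v1; rewrite X_phi_u2.
    assert (exp (lam * tau) <= 1) by (rewrite <- exp_0; apply exp_le_compat; nra).
    nra. }
  assert (HY1 : Y v1 < 0).
  { unfold v1; rewrite F_phi_self by exact lam_neq0.
    pose proof (exp_pos (lam * tau)); nra. }
  destruct (ramp_root_with_small_decay lam k1 eps (X v1) (Y v1)) as [t [Ht [Hroot Hsmall]]];
    [exact lam_neg | exact k1_pos | exact HY1 | nra | nra |].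
  exists (phi lam a c t v1 u1); split; [|split].
  - apply reachable_trans with v1; apply reachable_phi; lra.
  - rewrite Y_phi_u1; exact Hroot.
  - rewrite F_phi_self by exact lam_neq0; exact Hsmall.
Qed.

Lemma reachable_along_axis z z' : Y z = 0 -> Y z' = 0 -> X z <= X z' -> reach z z'.
Proof.
  intros Hz Hz' Hle; pose proof k2_pos.
  set (d := (X z' - X z) / k2).
  assert (Hd : k2 * d = X z' - X z) by (unfold d; field; lra).
  replace z' with (phi lam a c d z u2).
  - apply reachable_phi; [apply Rdiv_le_0_compat; lra | lra].
  - apply (F_inj lam a c u1 u2); [exact lam_neq0 | exact a_neq0 | nra | |].
    + rewrite X_phi_u2, Hz; lra.
    + rewrite F_phi_self, Hz, Hz' by exact lam_neq0; ring.
Qed.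

Lemma reachable_quadrant v w : 0 < X v -> Y v < 0 -> 0 < X w -> Y w < 0 -> reach v w.
Proof.
  intros HXv HYv HXw HYw.
  destruct (reachable_axis_backward w HXw HYw) as [z [Hzw [HYz HXz]]].
  destruct (reachable_axis_forward v (X z) HXv HYv ltac:(lra)) as [z' [Hvz' [HYz' HXz']]].
  apply reachable_trans with z'; [exact Hvz'|].
  apply reachable_trans with z; [|exact Hzw].
  exact (reachable_along_axis z' z HYz' HYz HXz').
Qed.

Lemma reachable_opposite_quadrant v : exists z, reach v z /\ X z < 0 /\ 0 < Y z.
Proof.
  pose proof k1_pos; pose proof k2_pos; pose proof (Rabs_pos (X v)); pose proof (Rabs_pos (Y v)).
  assert (HXabs : - Rabs (X v) <= X v <= Rabs (X v)).
  { pose proof (Rle_abs (X v)); pose proof (Rle_abs (- X v)); rewrite Rabs_Ropp in *; lra. }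
  assert (HYabs : - Rabs (Y v) <= Y v).
  { pose proof (Rle_abs (- Y v)); rewrite Rabs_Ropp in *; lra. }
  set (delta := 1 - exp lam).
  assert (Hdelta : 0 < delta).
  { unfold delta; rewrite <- exp_0 at 1; pose proof (exp_increasing lam 0 lam_neg); lra. }
  set (M := (Rabs (X v) + k2) / delta + 1).
  assert (HM : delta * M = Rabs (X v) + k2 + delta) by (unfold M; field; lra).
  assert (HM0 : 1 <= M).
  { unfold M; assert (0 <= (Rabs (X v) + k2) / delta)
      by (apply Rdiv_le_0_compat; lra); lra. }
  set (T := (Rabs (X v) + Rabs (Y v) + M) / k1).
  assert (HT : k1 * T = Rabs (X v) + Rabs (Y v) + M) by (unfold T; field; lra).
  assert (HT0 : 0 <= T) by (unfold T; apply Rdiv_le_0_compat; lra).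
  set (v1 := phi lam a c T v u1).
  assert (Hexp : 0 < exp (lam * T) <= 1)
    by (split; [apply exp_pos | rewrite <- exp_0; apply exp_le_compat; nra]).
  assert (HX1 : X v1 <= Rabs (X v)) by (unfold v1; rewrite F_phi_self by exact lam_neq0; nra).
  assert (HY1 : M <= Y v1).
  { unfold v1; rewrite Y_phi_u1.
    assert (0 <= (Rabs (X v) - X v) * (1 - exp (lam * T))) by (apply Rmult_le_pos; lra).
    nra. }
  exists (phi lam a c 1 v1 u2); split; [|split].
  - apply reachable_trans with v1; apply reachable_phi; lra.
  - rewrite X_phi_u2, Rmult_1_r.
    replace (exp lam - 1) with (- delta) by (unfold delta; ring).
    assert (delta * M <= delta * Y v1) by (apply Rmult_le_compat_l; lra).
    lra.
  - rewrite F_phi_self, Rmult_1_r by exact lam_neq0; pose proof (exp_pos lam); nra.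
Qed.

End Controllability.

Lemma reachable_from_anywhere lam a c wm wp u1 u2 v w : lam < 0 -> 0 < a ->
  wm <= u1 <= wp -> wm <= u2 <= wp -> u1 * u2 < 0 ->
  0 < F lam a c u1 w -> F lam a c u2 w < 0 -> reachable lam a c wm wp v w.
Proof.
  intros Hlam Ha Hu1 Hu2 Hu12 HXw HYw.
  destruct (reachable_opposite_quadrant lam a c wm wp u2 u1 Hlam Ha Hu2 Hu1 ltac:(lra) v)
    as [z [Hvz [HYz HXz]]].
  apply reachable_trans with z; [exact Hvz|].
  exact (reachable_quadrant lam a c wm wp u1 u2 Hlam Ha Hu1 Hu2 Hu12 z w HXz HYz HXw HYw).
Qed.

Theorem lemma1 (lam a c wm wp : R) :
  lam < 0 -> 0 < a -> wm < 0 < wp ->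
  (* (1) invariance in negative time of C^- and C^+ *)
  (forall w, wm <= w <= wp -> forall v, Cminus lam a c wm wp v ->
     forall tau, tau <= 0 -> Cminus lam a c wm wp (phi lam a c tau v w)) /\
  (forall w, wm <= w <= wp -> forall v, Cplus lam a c wm wp v ->
     forall tau, tau <= 0 -> Cplus lam a c wm wp (phi lam a c tau v w)) /\
  (* (2) controllability of C(w1,w2) *)
  (forall w1 w2, wm <= w1 -> w1 < 0 -> 0 < w2 -> w2 <= wp ->
     forall v w, Creg lam a c w1 w2 v -> Creg lam a c w1 w2 w ->
       reachable lam a c wm wp v w).
Proof.
  intros Hlam Ha Hw; split; [|split].
  - intros q Hq v [Hm Hp] tau Htau; split; apply (F_neg_backward lam a c wm wp); auto; lra.
  - intros q Hq v Hv tau Htau.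
    apply Cplus_iff_above_branch in Hv; auto; apply Cplus_iff_above_branch; auto.
    destruct Hv as [Hv | Hv]; [left | right];
      apply above_branch_backward; auto; nra.
  - (* every point of C(w1, w2) is reachable from anywhere *)
    intros w1 w2 Hw1 Hw1' Hw2 Hw2' v w _ Hw'; unfold Creg in Hw'.
    assert (Hw12 : w1 * w2 < 0) by nra.
    destruct (Rlt_or_le 0 (F lam a c w1 w)) as [H1 | H1].
    + apply (reachable_from_anywhere lam a c wm wp w1 w2); auto; lra || nra.
    + assert (H1' : F lam a c w1 w < 0)
        by (destruct H1 as [H1 | E]; [exact H1 | rewrite E in Hw'; lra]).
      apply (reachable_from_anywhere lam a c wm wp w2 w1); auto; lra || nra.
Qed.
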